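(* Let $\mathcal{A}$ be a unital $*$-algebra. Then $\mathcal{D}(\mathcal{A})$ is $*$-isomorphic to a $*$-subalgebra of the free product of $*$-algebras $\mathcal{A}\star \mathcal{D}(\mathbb{C} [\mathbb{Z}_2])\star \mathcal{D}(\mathbb{C} [\mathbb{Z}_2])$.
   Context: All algebras are complex and unital. For a unital associative algebra $\mathcal{A}$, $\mathcal{A}^*$ is an associative algebra with an additive, conjugate-linear, anti-multiplicative bijection $\phi:\mathcal{A}\to\mathcal{A}^*$. The $*$-double $\mathcal{D}(\mathcal{A})$ is the unital free product $\mathcal{A}*\mathcal{A}^*$ of associative algebras with involution determined by $a^*=\phi(a)$ for $a\in\mathcal{A}$ and $b^*=\phi^{-1}(b)$ for $b\in\mathcal{A}^*$; for a $*$-algebra $\mathcal{A}$, $\mathcal{D}(\mathcal{A})$ is formed from its underlying associative algebra (ignoring the original involution). $\mathbb{C}[\mathbb{Z}_2]$ is the group algebra of the two-element group, regarded as an associative algebra. The symbol $\star$ denotes the unital free product in the category of $*$-algebras, where $\mathcal{A}$ carries its own involution. *)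

From HB Require Import structures.
From mathcomp Require Import all_boot all_order all_algebra.
From mathcomp Require Import complex.
From mathcomp Require Import Rstruct.
Set Implicit Arguments. Unset Strict Implicit. Unset Printing Implicit Defensive.
Import Order.TTheory GRing.Theory Num.Theory.
Local Open Scope ring_scope.

Definition Cplx : numClosedFieldType := (Rdefinitions.R)[i].

Definition alg_hom (A B : algType Cplx) (f : A -> B) : Prop :=
  linear f /\ monoid_morphism f.

Definition is_star (A : algType Cplx) (s : A -> A) : Prop :=
  [/\ involutive s,
      (forall x y, s (x + y) = s x + s y),
      (forall (c : Cplx) x, s (c *: x) = c^* *: s x) &
      (forall x y, s (x * y) = s y * s x)].

Definition star_hom (A B : algType Cplx) (sA : A -> A) (sB : B -> B)
  (f : A -> B) : Prop :=
  alg_hom f /\ forall x, f (sA x) = sB (f x).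

(* A' is an "A^*" for A via phi: additive, conjugate-linear,
   anti-multiplicative bijection A -> A'. *)
Definition is_conj_opp (A A' : algType Cplx) (phi : A -> A') : Prop :=
  [/\ bijective phi,
      (forall x y, phi (x + y) = phi x + phi y),
      (forall (c : Cplx) x, phi (c *: x) = c^* *: phi x) &
      (forall x y, phi (x * y) = phi y * phi x)].

Definition is_free_product2 (A B P : algType Cplx) (i : A -> P) (j : B -> P)
  : Prop :=
  [/\ alg_hom i, alg_hom j &
   forall (Q : algType Cplx) (f : A -> Q) (g : B -> Q),
     alg_hom f -> alg_hom g ->
     exists h : P -> Q,
       [/\ alg_hom h, (forall a, h (i a) = f a), (forall b, h (j b) = g b) &
        forall h' : P -> Q, alg_hom h' ->
          (forall a, h' (i a) = f a) -> (forall b, h' (j b) = g b) ->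
          forall x, h' x = h x]].

(* (D, sD, i, j) is the *-double D(A) = A * A^* (with A^* given by phi),
   with involution determined by a^* = phi a and b^* = phi^{-1} b. *)
Definition is_star_double (A A' D : algType Cplx) (phi : A -> A')
  (sD : D -> D) (i : A -> D) (j : A' -> D) : Prop :=
  [/\ is_conj_opp phi, is_free_product2 i j, is_star sD,
      (forall a, sD (i a) = j (phi a)) &
      (forall a, sD (j (phi a)) = i a)].

Definition is_group_alg_Z2 (G : algType Cplx) (g : G) : Prop :=
  g * g = 1 /\
  forall x : G, exists! ab : Cplx * Cplx, x = ab.1 *: 1 + ab.2 *: g.

Definition is_star_free_product3 (A B1 B2 P : algType Cplx)
  (sA : A -> A) (s1 : B1 -> B1) (s2 : B2 -> B2) (sP : P -> P)
  (k0 : A -> P) (k1 : B1 -> P) (k2 : B2 -> P) : Prop :=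
  [/\ is_star sP, star_hom sA sP k0, star_hom s1 sP k1, star_hom s2 sP k2 &
   forall (Q : algType Cplx) (sQ : Q -> Q) (f0 : A -> Q) (f1 : B1 -> Q)
          (f2 : B2 -> Q),
     is_star sQ -> star_hom sA sQ f0 -> star_hom s1 sQ f1 ->
     star_hom s2 sQ f2 ->
     exists h : P -> Q,
       [/\ star_hom sP sQ h, (forall a, h (k0 a) = f0 a),
           (forall b, h (k1 b) = f1 b), (forall b, h (k2 b) = f2 b) &
        forall h' : P -> Q, star_hom sP sQ h' ->
          (forall a, h' (k0 a) = f0 a) -> (forall b, h' (k1 b) = f1 b) ->
          (forall b, h' (k2 b) = f2 b) -> forall x, h' x = h x]].

From HB Require Import structures.
From mathcomp Require Import all_boot all_order all_algebra.
From mathcomp Require Import complex.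
From mathcomp Require Import Rstruct.

(* The map a |-> u a u, where u is the image in the first copy of
   D(C[Z_2]) of the group generator (so u^2 = 1), extends by the universal
   property of the double to a *-homomorphism F : D(A) -> P.  To see that F
   is injective, represent P on 2x2 matrices over D(A): A acts by
   a |-> diag(a, phi(a^* )) and both copies of D(C[Z_2]) send the generator
   to the Hadamard matrix H.  The composite D(A) -> M_2(D(A)) is then
   x |-> H diag(x, theta x) H, with theta the automorphism of D(A) exchanging
   A and A^*, and this map is clearly injective since H^2 = 1. *)

Set Implicit Arguments. Unset Strict Implicit. Unset Printing Implicit Defensive.
Import GRing.Theory Num.Theory.
Local Open Scope ring_scope.

Section AlgHom.
Variables A B : algType Cplx.

Lemma alg_homD (f : A -> B) : alg_hom f -> {morph f : x y / x + y}.
Proof. by case=> L _ x y; have := L 1 x y; rewrite !scale1r. Qed.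

Lemma alg_hom0 (f : A -> B) : alg_hom f -> f 0 = 0.
Proof. by move=> /alg_homD fD; apply: (@addrI _ (f 0)); rewrite -fD !addr0. Qed.

Lemma alg_homZ (f : A -> B) : alg_hom f -> forall c, {morph f : x / c *: x}.
Proof.
by move=> Hf c x; have := Hf.1 c x 0; rewrite !addr0 (alg_hom0 Hf) addr0.
Qed.

Lemma alg_homM (f : A -> B) : alg_hom f -> {morph f : x y / x * y}.
Proof. by case=> _ []. Qed.

Lemma alg_hom1 (f : A -> B) : alg_hom f -> f 1 = 1.
Proof. by case=> _ []. Qed.

Lemma alg_homP (f : A -> B) :
  {morph f : x y / x + y} -> (forall c, {morph f : x / c *: x}) ->
  {morph f : x y / x * y} -> f 1 = 1 -> alg_hom f.
Proof. by move=> fD fZ fM f1; split=> [c x y|]; [rewrite fD fZ | split]. Qed.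

Lemma conjugate_alg_hom (f : A -> B) (u : B) : u * u = 1 -> alg_hom f ->
  alg_hom (fun x => u * f x * u).
Proof.
move=> uu Hf; apply: alg_homP => [x y|c x|x y|].
- by rewrite (alg_homD Hf) mulrDr mulrDl.
- by rewrite (alg_homZ Hf) -scalerAr -scalerAl.
- by rewrite (alg_homM Hf) !mulrA -[u * f x * u * u]mulrA uu mulr1.
- by rewrite (alg_hom1 Hf) mulr1 uu.
Qed.

Definition anti_hom (f : A -> B) : Prop :=
  [/\ {morph f : x y / x + y}, (forall c x, f (c *: x) = c^* *: f x),
      (forall x y, f (x * y) = f y * f x) & f 1 = 1].

Lemma anti_hom0 (f : A -> B) : anti_hom f -> f 0 = 0.
Proof. by case=> fD _ _ _; apply: (@addrI _ (f 0)); rewrite -fD !addr0. Qed.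

Lemma anti_homN (f : A -> B) : anti_hom f -> {morph f : x / - x}.
Proof.
move=> Hf x; have f0 := anti_hom0 Hf; case: Hf => fD _ _ _.
by apply: (@addrI _ (f x)); rewrite -fD !subrr f0.
Qed.

Lemma anti_homA (f : A -> B) : anti_hom f -> forall c, f c%:A = c^*%:A.
Proof. by case=> _ fZ _ f1 c; rewrite fZ f1. Qed.

End AlgHom.

Section AlgHomComp.
Variables A B C : algType Cplx.

Lemma comp_alg_hom (f : A -> B) (g : B -> C) :
  alg_hom f -> alg_hom g -> alg_hom (g \o f).
Proof.
move=> Hf Hg; apply: alg_homP => [x y|c x|x y|] /=.
- by rewrite (alg_homD Hf) (alg_homD Hg).
- by rewrite (alg_homZ Hf) (alg_homZ Hg).
- by rewrite (alg_homM Hf) (alg_homM Hg).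
- by rewrite (alg_hom1 Hf) (alg_hom1 Hg).
Qed.

Lemma comp_anti_hom (f : A -> B) (g : B -> C) :
  anti_hom f -> anti_hom g -> alg_hom (g \o f).
Proof.
case=> fD fZ fM f1 [gD gZ gM g1]; apply: alg_homP => [x y|c x|x y|] /=.
- by rewrite fD gD.
- by rewrite fZ gZ conjCK.
- by rewrite fM gM.
- by rewrite f1 g1.
Qed.

Lemma comp_anti_alg_hom (f : A -> B) (g : B -> C) :
  anti_hom f -> alg_hom g -> anti_hom (g \o f).
Proof.
case=> fD fZ fM f1 Hg; split=> [x y|c x|x y|] /=.
- by rewrite fD (alg_homD Hg).
- by rewrite fZ (alg_homZ Hg).
- by rewrite fM (alg_homM Hg).
- by rewrite f1 (alg_hom1 Hg).
Qed.

End AlgHomComp.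

Lemma star_anti_hom (A : algType Cplx) (s : A -> A) : is_star s -> anti_hom s.
Proof.
case=> sK sD sZ sM; split=> //.
by have := sM (s 1) 1; rewrite mulr1 sK mulr1 => <-.
Qed.

Lemma conj_opp_anti_hom (A A' : algType Cplx) (phi : A -> A') :
  is_conj_opp phi ->
  anti_hom phi /\
  exists psi : A' -> A, [/\ cancel phi psi, cancel psi phi & anti_hom psi].
Proof.
case=> [[psi phiK psiK] phiD phiZ phiM].
have phi1 : phi 1 = 1 by have := phiM (psi 1) 1; rewrite mulr1 psiK mulr1.
split=> //; exists psi; split=> //.
have inj := can_inj phiK; split=> [x y|c x|x y|].
- by apply: inj; rewrite phiD !psiK.
- by apply: inj; rewrite phiZ !psiK conjCK.
- by apply: inj; rewrite phiM !psiK.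
- by rewrite -phi1 phiK.
Qed.

Lemma free_product2_eq (A B P Q : algType Cplx) (i : A -> P) (j : B -> P)
    (h1 h2 : P -> Q) :
  is_free_product2 i j -> alg_hom h1 -> alg_hom h2 ->
  (forall a, h1 (i a) = h2 (i a)) -> (forall b, h1 (j b) = h2 (j b)) ->
  h1 =1 h2.
Proof.
case=> Hi Hj U H1 H2 E1 E2 x.
have [h [_ _ _ Uh]] :=
  U Q (h2 \o i) (h2 \o j) (comp_alg_hom Hi H2) (comp_alg_hom Hj H2).
by rewrite (Uh h1 H1 E1 E2) (Uh h2 H2).
Qed.

Section StarDouble.
Variables (A A' D : algType Cplx) (phi : A -> A') (sD : D -> D).
Variables (i : A -> D) (j : A' -> D).
Hypothesis HD : is_star_double phi sD i j.

Lemma star_double_extend (Q : algType Cplx) (sQ : Q -> Q) (rho : A -> Q) :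
  is_star sQ -> alg_hom rho ->
  exists2 F : D -> Q, star_hom sD sQ F & forall a, F (i a) = rho a.
Proof.
have [Hphi HF HsD iE jE] := HD.
have [_ [psi [phiK psiK psi_anti]]] := conj_opp_anti_hom Hphi.
move=> HsQ Hrho.
have sQ_anti := star_anti_hom HsQ; have sD_anti := star_anti_hom HsD.
have sQK : involutive sQ by case: HsQ.
have sDK : involutive sD by case: HsD.
have Hrho' : alg_hom (sQ \o (rho \o psi)).
  exact: comp_anti_hom (comp_anti_alg_hom psi_anti Hrho) sQ_anti.
have [_ _ U] := HF.
have [F [HF_hom Fi Fj _]] := U Q rho _ Hrho Hrho'.
have HF' : alg_hom (sQ \o (F \o sD)).
  exact: comp_anti_hom (comp_anti_alg_hom sD_anti HF_hom) sQ_anti.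
have F_star : sQ \o (F \o sD) =1 F.
  apply: (free_product2_eq HF) => // [a|b] /=.
  - by rewrite iE Fj /= phiK sQK.
  - by rewrite -[b]psiK jE Fi Fj /= phiK.
exists F => //; split=> // x.
by have := F_star (sD x); rewrite /= sDK => ->.
Qed.

End StarDouble.

Lemma mul_z2 (B : algType Cplx) (w : B) (a b a' b' : Cplx) : w * w = 1 ->
  (a *: 1 + b *: w) * (a' *: 1 + b' *: w) =
  (a * a' + b * b') *: 1 + (a * b' + b * a') *: w.
Proof.
move=> ww; rewrite !mulrDl !mulrDr -!scalerAl -!scalerAr !scalerA !mul1r !mulr1.
by rewrite ww !scalerDl -!addrA; congr (_ + _); rewrite addrA addrC.
Qed.

Section GroupAlgebraZ2.
Variables (G : algType Cplx) (g : G).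
Hypothesis HG : is_group_alg_Z2 g.

Lemma z2_coord_exists (x : G) :
  exists ab : Cplx * Cplx, x == ab.1 *: 1 + ab.2 *: g.
Proof. by have [ab [/eqP ? _]] := HG.2 x; exists ab. Qed.

Definition z2_coord (x : G) : Cplx * Cplx := xchoose (z2_coord_exists x).

Lemma z2_coordK x : x = (z2_coord x).1 *: 1 + (z2_coord x).2 *: g.
Proof. exact/eqP/(xchooseP (z2_coord_exists x)). Qed.

Lemma z2_coord_uniq x a b : x = a *: 1 + b *: g -> z2_coord x = (a, b).
Proof.
by move=> E; have [ab [_ U]] := HG.2 x; rewrite -(U (a, b) E) (U _ (z2_coordK x)).
Qed.

Variables (B : algType Cplx) (v : B).
Hypothesis vv : v * v = 1.

Definition z2_lift (x : G) : B := (z2_coord x).1 *: 1 + (z2_coord x).2 *: v.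

Lemma z2_liftE a b : z2_lift (a *: 1 + b *: g) = a *: 1 + b *: v.
Proof. by rewrite /z2_lift (z2_coord_uniq (erefl _)). Qed.

Lemma z2_lift_gen : z2_lift g = v.
Proof. by have := z2_liftE 0 1; rewrite !scale0r !add0r !scale1r. Qed.

Lemma z2_lift_alg_hom : alg_hom z2_lift.
Proof.
have [g2 _] := HG.
have coordP x : exists a b, x = a *: 1 + b *: g.
  by exists (z2_coord x).1, (z2_coord x).2; apply: z2_coordK.
apply: alg_homP => [x y|c x|x y|].
- have [a [b ->]] := coordP x; have [a' [b' ->]] := coordP y.
  by rewrite addrACA -!scalerDl !z2_liftE addrACA -!scalerDl.
- have [a [b ->]] := coordP x.
  by rewrite scalerDr !scalerA !z2_liftE scalerDr !scalerA.
- have [a [b ->]] := coordP x; have [a' [b' ->]] := coordP y.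
  by rewrite mul_z2 // !z2_liftE mul_z2.
- by have := z2_liftE 1 0; rewrite !scale1r !scale0r !addr0.
Qed.

End GroupAlgebraZ2.

Section MatrixAlgebra.
Variables (R : pzRingType) (B : algType R) (n : nat).

Definition mxalg := 'M[B]_n.+1.
HB.instance Definition _ := GRing.NzRing.on mxalg.

Definition mxalg_scale (c : R) (X : mxalg) : mxalg := map_mx ( *:%R c) X.

Lemma mxalg_scaleA a b X :
  mxalg_scale a (mxalg_scale b X) = mxalg_scale (a * b) X.
Proof. by apply/matrixP => i j; rewrite !mxE scalerA. Qed.

Lemma mxalg_scale1 : left_id 1 mxalg_scale.
Proof. by move=> X; apply/matrixP => i j; rewrite !mxE scale1r. Qed.

Lemma mxalg_scaleDr : right_distributive mxalg_scale +%R.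
Proof. by move=> a X Y; apply/matrixP => i j; rewrite !mxE scalerDr. Qed.

Lemma mxalg_scaleDl X : {morph mxalg_scale^~ X : a b / a + b}.
Proof. by move=> a b; apply/matrixP => i j; rewrite !mxE scalerDl. Qed.

HB.instance Definition _ := GRing.Zmodule_isLmodule.Build R mxalg
  mxalg_scaleA mxalg_scale1 mxalg_scaleDr mxalg_scaleDl.

Lemma mxalg_scaleAl (a : R) (X Y : mxalg) : a *: (X * Y) = (a *: X) * Y.
Proof.
apply/matrixP => i j; rewrite !mxE scaler_sumr; apply: eq_bigr => k _.
by rewrite !mxE scalerAl.
Qed.
HB.instance Definition _ := GRing.Lmodule_isLalgebra.Build R mxalg mxalg_scaleAl.

Lemma mxalg_scaleAr (a : R) (X Y : mxalg) : a *: (X * Y) = X * (a *: Y).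
Proof.
apply/matrixP => i j; rewrite !mxE scaler_sumr; apply: eq_bigr => k _.
by rewrite !mxE scalerAr.
Qed.
HB.instance Definition _ := GRing.Lalgebra_isAlgebra.Build R mxalg mxalg_scaleAr.

End MatrixAlgebra.

Section TwoByTwo.
Variables (R : pzRingType) (B : algType R).
Local Notation M2 := (mxalg B 1).

Definition mx2 (a b c d : B) : M2 :=
  \matrix_(i, j) if i == ord0 then (if j == ord0 then a else b)
                 else (if j == ord0 then c else d).

Lemma ord2P (i : 'I_2) : i = ord0 \/ i = ord_max.
Proof. by case: i => [[|[|//]] Hi]; [left|right]; apply/val_inj. Qed.

Lemma mx2_eta (X : M2) :
  X = mx2 (X ord0 ord0) (X ord0 ord_max) (X ord_max ord0) (X ord_max ord_max).
Proof.
by apply/matrixP => i j; rewrite mxE; case: (ord2P i) => ->; case: (ord2P j) => ->.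
Qed.

Lemma mx2_00 a b c d : mx2 a b c d ord0 ord0 = a.
Proof. by rewrite mxE. Qed.

Lemma add_mx2 a b c d a' b' c' d' :
  mx2 a b c d + mx2 a' b' c' d' = mx2 (a + a') (b + b') (c + c') (d + d').
Proof.
apply/matrixP => i j; rewrite !mxE.
by case: (ord2P i) => ->; case: (ord2P j) => ->.
Qed.

Lemma scale_mx2 (k : R) a b c d :
  k *: mx2 a b c d = mx2 (k *: a) (k *: b) (k *: c) (k *: d).
Proof.
apply/matrixP => i j; rewrite !mxE.
by case: (ord2P i) => ->; case: (ord2P j) => ->.
Qed.

Lemma mul_mx2 a b c d a' b' c' d' :
  mx2 a b c d * mx2 a' b' c' d' =
  mx2 (a * a' + b * c') (a * b' + b * d') (c * a' + d * c') (c * b' + d * d').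
Proof.
apply/matrixP => i j; rewrite !mxE !big_ord_recl big_ord0 addr0 !mxE.
have -> : lift ord0 ord0 = ord_max :> 'I_2 by apply: val_inj.
by case: (ord2P i) => ->; case: (ord2P j) => ->.
Qed.

Lemma mx2_1 : 1 = mx2 1 0 0 1.
Proof.
apply/matrixP => i j; rewrite !mxE.
by case: (ord2P i) => ->; case: (ord2P j) => ->.
Qed.

End TwoByTwo.

Section TwoByTwoStar.
Variables (B : algType Cplx) (sB : B -> B).
Hypothesis HsB : is_star sB.
Local Notation M2 := (mxalg B 1).

Lemma diag_mx2_alg_hom (A : algType Cplx) (f g : A -> B) :
  alg_hom f -> alg_hom g -> alg_hom (fun x => mx2 (f x) 0 0 (g x) : M2).
Proof.
move=> Hf Hg; apply: alg_homP => [x y|c x|x y|].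
- by rewrite add_mx2 addr0 (alg_homD Hf) (alg_homD Hg).
- by rewrite scale_mx2 scaler0 (alg_homZ Hf) (alg_homZ Hg).
- by rewrite mul_mx2 !mulr0 !mul0r !addr0 !add0r (alg_homM Hf) (alg_homM Hg).
- by rewrite mx2_1 (alg_hom1 Hf) (alg_hom1 Hg).
Qed.

(* X |-> J (sB X)^T J with sB applied entrywise and J the antidiagonal
   permutation matrix; it sends diag(a, b) to diag(sB b, sB a). *)
Definition mx2_star (X : M2) : M2 :=
  mx2 (sB (X ord_max ord_max)) (sB (X ord0 ord_max))
      (sB (X ord_max ord0)) (sB (X ord0 ord0)).

Lemma mx2_starE a b c d : mx2_star (mx2 a b c d) = mx2 (sB d) (sB b) (sB c) (sB a).
Proof. by rewrite /mx2_star !mxE. Qed.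

Lemma mx2_star_is_star : is_star mx2_star.
Proof.
have [sK sD sZ sM] := HsB.
split=> [X|X Y|k X|X Y].
- by rewrite [X in RHS]mx2_eta /mx2_star !mxE !sK.
- by rewrite [X]mx2_eta [Y]mx2_eta add_mx2 !mx2_starE add_mx2 !sD.
- by rewrite [X]mx2_eta scale_mx2 !mx2_starE scale_mx2 !sZ.
- rewrite [X]mx2_eta [Y]mx2_eta mul_mx2 !mx2_starE mul_mx2 !sD !sM addrC.
  by congr mx2; rewrite addrC.
Qed.

Definition hadamard : M2 :=
  let s : Cplx := sqrtC 2^-1 in mx2 s%:A s%:A s%:A (- s%:A).

Lemma hadamard_sqr : hadamard * hadamard = 1.
Proof.
pose s : Cplx := sqrtC 2^-1.
have ss : s * s = 2^-1 by rewrite -expr2 sqrtCK.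
have h2 : 2^-1 + 2^-1 = 1 :> Cplx by rewrite [RHS](splitr 1) mul1r.
rewrite /hadamard mul_mx2 mx2_1 !mulrN !mulNr opprK !mulr_algl !scalerA ss.
by congr mx2; rewrite ?subrr // -scalerDl h2 scale1r.
Qed.

Lemma hadamard_star_diag (p q : B) :
  mx2_star hadamard * mx2 p 0 0 q * mx2_star hadamard =
  hadamard * mx2 q 0 0 p * hadamard.
Proof.
have sB_anti := star_anti_hom HsB.
have sc : (sqrtC 2^-1 : Cplx)^* = sqrtC 2^-1.
  by apply: geC0_conj; rewrite sqrtC_ge0 invr_ge0 ler0n.
rewrite /hadamard mx2_starE !(anti_homN sB_anti) !(anti_homA sB_anti) sc !mul_mx2.
rewrite !(mulr0, mul0r, addr0, add0r, mulNr, mulrN, opprK, mulr_algl, mulr_algr, scalerN).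
by congr mx2; rewrite addrC.
Qed.

Lemma hadamard_conj_diag_inj (t : B -> B) :
  injective (fun x => hadamard * mx2 x 0 0 (t x) * hadamard).
Proof.
have conjK X : hadamard * (hadamard * X * hadamard) * hadamard = X.
  by rewrite !mulrA hadamard_sqr mul1r -mulrA hadamard_sqr mulr1.
move=> x y /(congr1 (fun X => (hadamard * X * hadamard) ord0 ord0)) /=.
by rewrite !conjK !mx2_00.
Qed.

End TwoByTwoStar.

Section DoubleEmbedding.
Variables (A A' DA : algType Cplx) (sA : A -> A) (phi : A -> A').
Variables (sDA : DA -> DA) (iA : A -> DA) (jA : A' -> DA).
Hypotheses (HA : is_star sA) (HDA : is_star_double phi sDA iA jA).
Local Notation M2 := (mxalg DA 1).

Definition double_diag (a : A) : M2 := mx2 (iA a) 0 0 (jA (phi (sA a))).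

Lemma double_diag_star_hom : star_hom sA (mx2_star sDA) double_diag.
Proof.
have [Hphi [HiA HjA _] HsDA iE jE] := HDA.
have [phi_anti _] := conj_opp_anti_hom Hphi.
have sAK : involutive sA by case: HA.
split=> [|a].
  apply: diag_mx2_alg_hom HiA _.
  exact: comp_alg_hom (comp_anti_hom (star_anti_hom HA) phi_anti) HjA.
by rewrite /double_diag mx2_starE (anti_hom0 (star_anti_hom HsDA)) jE iE sAK.
Qed.

Lemma double_flip : exists2 th : DA -> DA, alg_hom th &
  (forall a, th (iA a) = jA (phi (sA a))) /\ (forall a, th (jA (phi a)) = iA (sA a)).
Proof.
have [Hphi [HiA HjA UF] _ _ _] := HDA.
have [phi_anti [psi [phiK _ psi_anti]]] := conj_opp_anti_hom Hphi.
have sA_anti := star_anti_hom HA.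
have [th [Hth thi thj _]] := UF DA (fun a => jA (phi (sA a))) (fun b => iA (sA (psi b)))
  (comp_alg_hom (comp_anti_hom sA_anti phi_anti) HjA)
  (comp_alg_hom (comp_anti_hom psi_anti sA_anti) HiA).
by exists th => //; split=> // a; rewrite thj phiK.
Qed.

Lemma double_embedding (P : algType Cplx) (sP : P -> P) (k0 : A -> P) (u : P)
    (h : P -> M2) :
  is_star sP -> star_hom sA sP k0 -> u * u = 1 ->
  star_hom sP (mx2_star sDA) h -> (forall a, h (k0 a) = double_diag a) ->
  h u = hadamard DA ->
  exists F : DA -> P, star_hom sDA sP F /\ injective F.
Proof.
move=> HsP Hk0 uu Hh hk0 hu.
have [Hphi HFP HsDA iE _] := HDA.
have [_ [psi [_ psiK _]]] := conj_opp_anti_hom Hphi.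
have sAK : involutive sA by case: HA.
have [_ _ _ starM] := mx2_star_is_star HsDA.
have [F HF Fi] := star_double_extend HDA HsP (conjugate_alg_hom uu Hk0.1).
have [th Hth [thi thj]] := double_flip.
have hF : (fun x => h (F x)) =1
          (fun x => hadamard DA * mx2 x 0 0 (th x) * hadamard DA).
  apply: (free_product2_eq HFP).
  - exact: comp_alg_hom HF.1 Hh.1.
  - by apply/(conjugate_alg_hom (hadamard_sqr _))/diag_mx2_alg_hom => //; apply: alg_homP.
  - by move=> a; rewrite Fi !(alg_homM Hh.1) hu hk0 thi.
  - move=> b; rewrite -[b]psiK -iE HF.2 Fi Hh.2 !(alg_homM Hh.1) hu hk0.
    rewrite !starM mulrA -double_diag_star_hom.2 /double_diag sAK iE thj.
    exact: hadamard_star_diag.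
by exists F; split=> // x y /(congr1 h); rewrite !hF => /hadamard_conj_diag_inj.
Qed.

End DoubleEmbedding.

Theorem lemma1
  (A : algType Cplx) (sA : A -> A) (HA : is_star sA)
  (A' : algType Cplx) (phi : A -> A') (DA : algType Cplx) (sDA : DA -> DA)
  (iA : A -> DA) (jA : A' -> DA) (HDA : is_star_double phi sDA iA jA)
  (G : algType Cplx) (g : G) (HG : is_group_alg_Z2 g)
  (G' : algType Cplx) (psi : G -> G') (DG : algType Cplx) (sDG : DG -> DG)
  (iG : G -> DG) (jG : G' -> DG) (HDG : is_star_double psi sDG iG jG)
  (P : algType Cplx) (sP : P -> P) (k0 : A -> P) (k1 k2 : DG -> P)
  (HP : is_star_free_product3 sA sDG sDG sP k0 k1 k2) :
  exists F : DA -> P, star_hom sDA sP F /\ injective F.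
Proof.
have [HsP Hk0 Hk1 _ UP] := HP.
have [_ _ HsDA _ _] := HDA.
have HsM := mx2_star_is_star HsDA.
have [f1 Hf1 f1i] :=
  star_double_extend HDG HsM (z2_lift_alg_hom HG (hadamard_sqr DA)).
have [h [Hh hk0 hk1 _ _]] :=
  UP _ _ _ f1 f1 HsM (double_diag_star_hom HA HDA) Hf1 Hf1.
have [[g2 _] [_ [HiG _ _] _ _ _]] := (HG, HDG).
apply: (double_embedding HA HDA HsP Hk0 _ Hh hk0 (u := k1 (iG g))).
  by rewrite -(alg_homM Hk1.1) -(alg_homM HiG) g2 (alg_hom1 HiG) (alg_hom1 Hk1.1).
by rewrite hk1 f1i z2_lift_gen.
Qed.
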